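(* Assume (A4). Let $\beta>0$, $p\in(0,2]$, $t_0>0$, and let $w:[t_0,\infty)\to\mathbb R^m$ be continuous with $w(t)\to w^*\in\mathbb R^m$ as $t\to\infty$. For $t\ge t_0$ let $$z(t):=\operatorname{argmin}_{z\in\mathcal H}\ \max_{i=1,\dots,m}\big(f_i(z)-w_i(t)\big)+\frac{\beta}{2t^p}\|z\|^2$$ (unique minimizer). Then $z(t)\to z_0(w^* )$ strongly as $t\to\infty$.
   Context: $\mathcal H$ is a real Hilbert space with norm $\|\cdot\|$; $f_1,\dots,f_m:\mathcal H\to\mathbb R$ are convex and continuously differentiable. For $w\in\mathbb R^m$, $S(w):=\operatorname{argmin}_{z\in\mathcal H}\max_{i}(f_i(z)-w_i)$ and $z_0(w):=\operatorname{proj}_{S(w)}(0)$, the element of minimal norm of $S(w)$. Assumption (A4): $S(w)\neq\emptyset$ for every $w\in\mathbb R^m$ and the map $w\mapsto z_0(w)$ is continuous on $\mathbb R^m$. *)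

From HB Require Import structures.
From mathcomp Require Import all_boot all_order all_algebra.
From mathcomp Require Import all_classical all_reals all_analysis.
Set Implicit Arguments. Unset Strict Implicit. Unset Printing Implicit Defensive.
Import Order.TTheory GRing.Theory Num.Theory.
Import numFieldNormedType.Exports.
Local Open Scope classical_set_scope.
Local Open Scope ring_scope.

Definition inner_product (R : realType) (H : normedModType R) (ip : H -> H -> R) :=
  [/\ (forall x y, ip x y = ip y x),
      (forall (a : R) (x y z : H), ip (a *: x + y) z = a * ip x z + ip y z)
    & (forall x, ip x x = `|x| ^+ 2)].

Definition convex_fun (R : realType) (H : normedModType R) (f : H -> R) :=
  forall (x y : H) (l : R), 0 <= l <= 1 ->
    f (l *: x + (1 - l) *: y) <= l * f x + (1 - l) * f y.

(* continuously (Frechet) differentiable: differentiable everywhere, with a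
   continuous gradient (Riesz representative of the differential) *)
Definition C1_fun (R : realType) (H : normedModType R) (ip : H -> H -> R)
  (f : H -> R) :=
  exists g : H -> H, continuous g /\
    forall x, differentiable f x /\ ('d f x : H -> R) = (fun h => ip (g x) h).

Definition maxgap (R : realType) (H : Type) (m : nat) (hm : (0 < m)%N)
  (f : 'I_m -> H -> R) (w : 'rV[R]_m) (z : H) : R :=
  \big[Num.max/(f (Ordinal hm) z - w 0 (Ordinal hm))]_(i < m) (f i z - w 0 i).

Definition Sset (R : realType) (H : Type) (m : nat) (hm : (0 < m)%N)
  (f : 'I_m -> H -> R) (w : 'rV[R]_m) : set H :=
  [set z | forall y, maxgap hm f w z <= maxgap hm f w y].

Definition min_norm_elt (R : realType) (H : normedModType R) (A : set H) (x : H) :=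
  A x /\ forall y, A y -> `|x| <= `|y|.

From HB Require Import structures.
From mathcomp Require Import all_boot all_order all_algebra.
From mathcomp Require Import all_classical all_reals all_analysis.
From mathcomp Require Import lra ring.
Set Implicit Arguments. Unset Strict Implicit. Unset Printing Implicit Defensive.
Import Order.TTheory GRing.Theory Num.Theory.
Import numFieldNormedType.Exports.
Local Open Scope classical_set_scope.
Local Open Scope ring_scope.

(* Write M_w := max_i (f_i - w_i), c(t) := beta / (2 t^p) and x(t) := z0 (w t), so that
   x(t) --> z0 wstar by (A4) and c(t) --> 0. Testing the minimality of z(t) for the strongly
   convex function M_(w t) + c(t) |.|^2 at the midpoint of x(t) and z(t), and using that x(t)
   minimizes M_(w t), gives |x(t) - z(t)|^2 <= 2 (|x(t)|^2 - |z(t)|^2). On the other hand z(t)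
   minimizes M_wstar up to 2 |wstar - w t| + c(t) |z0 wstar|^2 --> 0, and in a Hilbert space
   near-minimizers of a continuous convex function have squared norm at least that of its
   minimal-norm minimizer, up to o(1): otherwise the nested nonempty convex sets of
   near-minimizers of smaller norm would contain, by the parallelogram law, a Cauchy sequence
   converging to a minimizer of smaller norm. Hence |x(t) - z(t)| --> 0. *)

Section InnerProduct.
Variables (R : realType) (H : normedModType R) (ip : H -> H -> R).
Hypothesis Hip : inner_product ip.

Lemma ip0l (z : H) : ip 0 z = 0.
Proof. case: Hip => _ ipl _; have := ipl 1 0 0 z; rewrite scaler0 addr0 mul1r; lra. Qed.

Lemma ipZl a (x z : H) : ip (a *: x) z = a * ip x z.
Proof. by case: Hip => _ ipl _; have := ipl a x 0 z; rewrite addr0 ip0l addr0. Qed.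

Lemma ipDl (x y z : H) : ip (x + y) z = ip x z + ip y z.
Proof. by case: Hip => _ ipl _; have := ipl 1 x y z; rewrite scale1r mul1r. Qed.

Lemma ipZr a (x z : H) : ip z (a *: x) = a * ip z x.
Proof. by case: Hip => ipC _ _; rewrite ipC ipZl ipC. Qed.

Lemma ipDr (x y z : H) : ip z (x + y) = ip z x + ip z y.
Proof. by case: Hip => ipC _ _; rewrite ipC ipDl ipC (ipC y). Qed.

Lemma parallelogram (x y : H) :
  `|x + y| ^+ 2 + `|x - y| ^+ 2 = 2 * `|x| ^+ 2 + 2 * `|y| ^+ 2.
Proof.
case: Hip => ipC _ ipn; have -> : x - y = x + (-1) *: y by rewrite scaleN1r.
by rewrite -!ipn !(ipDl, ipDr, ipZl, ipZr) (ipC y x); ring.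
Qed.

Lemma sqr_norm_midpoint (x y : H) :
  `|2^-1 *: (x + y)| ^+ 2 = (`|x| ^+ 2 + `|y| ^+ 2) / 2 - `|x - y| ^+ 2 / 4.
Proof.
rewrite normrZ ger0_norm ?invr_ge0 // exprMn.
have := parallelogram x y; move: (`|x + y| ^+ 2) => s hs.
have -> : s = 2 * `|x| ^+ 2 + 2 * `|y| ^+ 2 - `|x - y| ^+ 2 by lra.
by field.
Qed.

End InnerProduct.

Lemma convex_fun_midpoint (R : realType) (H : normedModType R) (f : H -> R) x y :
  convex_fun f -> f (2^-1 *: (x + y)) <= (f x + f y) / 2.
Proof.
move=> fconv; have half : 1 - 2^-1 = 2^-1 :> R by field.
have half01 : 0 <= (2:R)^-1 <= 1 by apply/andP; split; [rewrite invr_ge0 | rewrite invf_le1]; lra.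
by have := fconv x y _ half01; rewrite half scalerDr; lra.
Qed.

Section RegularizedMinimizer.
Variables (R : realType) (H : normedModType R) (ip : H -> H -> R).
Hypothesis Hip : inner_product ip.
Variables (M : H -> R) (c : R) (z : H).
Hypothesis Mconv : convex_fun M.
Hypothesis zmin : forall y, M z + c * `|z| ^+ 2 <= M y + c * `|y| ^+ 2.

(* Test the minimality of [z] at the midpoint of [y] and [z]. *)
Lemma regularized_minimizer_quadratic_growth y :
  M z + c * `|z| ^+ 2 + c / 2 * `|y - z| ^+ 2 <= M y + c * `|y| ^+ 2.
Proof.
have := zmin (2^-1 *: (y + z)).
rewrite (sqr_norm_midpoint Hip); have := convex_fun_midpoint y z Mconv.
nra.
Qed.

Lemma regularized_minimizer_dist x : 0 < c -> (forall y, M x <= M y) ->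
  `|x - z| ^+ 2 <= 2 * (`|x| ^+ 2 - `|z| ^+ 2).
Proof.
move=> c0 xmin; rewrite -(ler_pM2l c0).
have := regularized_minimizer_quadratic_growth x; have := xmin z; lra.
Qed.

End RegularizedMinimizer.

Lemma norm_mxentry_le (R : realType) m n (x : 'M[R]_(m, n)) i j : `|x i j| <= `|x|.
Proof. by change (`|x i j| <= mx_norm x); rewrite mx_normrE; exact: (le_bigmax _ _ (i, j)). Qed.

Lemma continuous_bigmax (R : realType) (T : topologicalType) (I : Type) (s : seq I)
    (P : pred I) (g0 : T -> R) (g : I -> T -> R) :
  continuous g0 -> (forall i, continuous (g i)) ->
  continuous (fun x => \big[Num.max/g0 x]_(i <- s | P i) g i x).
Proof.
move=> g0c gc; elim: s => [|i s IHs]; first by under eq_fun do rewrite big_nil.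
under eq_fun do rewrite big_cons; case: (P i) => //; exact: max_fun_continuous.
Qed.

Section Maxgap.
Variables (R : realType) (m : nat) (hm : (0 < m)%N).

Section Pointwise.
Variables (H : Type) (f : 'I_m -> H -> R).

Lemma maxgap_ge (w : 'rV[R]_m) y i : f i y - w 0 i <= maxgap hm f w y.
Proof. exact: le_bigmax. Qed.

Lemma maxgap_le (w : 'rV[R]_m) y a :
  (forall i, f i y - w 0 i <= a) -> maxgap hm f w y <= a.
Proof. by move=> le_a; apply: bigmax_le => // i _; exact: le_a. Qed.

Lemma maxgap_lipschitz (w w' : 'rV[R]_m) y :
  maxgap hm f w y <= maxgap hm f w' y + `|w - w'|.
Proof.
apply: maxgap_le => i; have := norm_mxentry_le (w - w') 0 i; rewrite !mxE.
have := maxgap_ge w' y i; rewrite ler_norml; lra.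
Qed.

End Pointwise.

Variables (H : normedModType R) (f : 'I_m -> H -> R).

Lemma convex_maxgap (w : 'rV[R]_m) :
  (forall i, convex_fun (f i)) -> convex_fun (maxgap hm f w).
Proof.
move=> fconv x y l /andP[l0 l1]; apply: maxgap_le => i.
have := fconv i x y l; rewrite l0 l1 => /(_ isT).
have := maxgap_ge f w x i; have := maxgap_ge f w y i.
have : 0 <= 1 - l by lra.
nra.
Qed.

Lemma maxgap_regularized_near_min (w w' : 'rV[R]_m) (c : R) (z y : H) : 0 <= c ->
  (forall u, maxgap hm f w z + c * `|z| ^+ 2 <= maxgap hm f w u + c * `|u| ^+ 2) ->
  maxgap hm f w' z <= maxgap hm f w' y + 2 * `|w' - w| + c * `|y| ^+ 2.
Proof.
move=> c0 zmin; have := zmin y; have := maxgap_lipschitz f w' w z.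
have := maxgap_lipschitz f w w' y; rewrite distrC.
have := mulr_ge0 c0 (sqr_ge0 `|z|); lra.
Qed.

Lemma continuous_maxgap (w : 'rV[R]_m) :
  (forall i, continuous (f i)) -> continuous (maxgap hm f w).
Proof.
move=> fc; have fwc i : continuous (fun z => f i z - w 0 i).
  by move=> z; apply: continuousB; [exact: fc | exact: cvg_cst].
exact: continuous_bigmax.
Qed.

End Maxgap.

Section NearMinimizers.
Variables (R : realType) (H : completeNormedModType R) (ip : H -> H -> R).
Hypothesis Hip : inner_product ip.

(* By the midpoint identity, [|y a - y b|^2 <= 8 e] for [a, b >= N]. *)
Lemma midpoint_sqr_norm_cvg (y : nat -> H) (A : R) :
  (forall e, 0 < e -> exists N, forall a b, (N <= a)%N -> (N <= b)%N ->
     `|y a| ^+ 2 <= A + e /\ A - e <= `|2^-1 *: (y a + y b)| ^+ 2) ->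
  cvg (y @ \oo).
Proof.
move=> ymid; apply/cauchy_cvgP/cauchy_exP => eps eps0.
have [|N yN] := ymid (eps ^+ 2 / 16); first by rewrite divr_gt0 ?exprn_gt0.
exists (y N), N => // n Nn; rewrite -ball_normE /ball_ /=.
have [yN2 midN] := yN N n (leqnn N) Nn; have [yn2 _] := yN n N Nn (leqnn N).
rewrite (sqr_norm_midpoint Hip) in midN.
have := normr_ge0 (y N - y n); nra.
Qed.

Lemma nested_convex_cvg (D : R -> set H) (r : R) :
  (forall eta, 0 < eta -> D eta !=set0) ->
  (forall eta eta', eta <= eta' -> D eta `<=` D eta') ->
  (forall eta a b, D eta a -> D eta b -> D eta (2^-1 *: (a + b))) ->
  (forall eta y, D eta y -> `|y| ^+ 2 <= r) ->
  exists2 y : nat -> H, cvg (y @ \oo) &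
    forall eta, 0 < eta -> \forall n \near \oo, D eta (y n).
Proof.
move=> Dne Dmono Dmid Dbd.
pose E := [set s : R | exists2 eta, 0 < eta & forall y, D eta y -> s <= `|y| ^+ 2].
have Esup : has_sup E.
  split; first by exists 0, 1 => // y _; exact: sqr_ge0.
  exists r => s [eta eta0 Es]; have [y Dy] := Dne eta eta0.
  exact: le_trans (Es y Dy) (Dbd _ _ Dy).
(* [A] is the limit of [inf_(D eta) |.|^2] as [eta] decreases to [0]. *)
pose A := sup E.
have A_below e : 0 < e -> exists2 eta, 0 < eta & forall y, D eta y -> A - e <= `|y| ^+ 2.
  move=> e0; have [s [eta eta0 Es] Ae] := sup_adherent e0 Esup.
  by exists eta => // y Dy; have := Es y Dy; rewrite -/A in Ae; lra.
have A_above eta e : 0 < eta -> 0 < e -> exists y, D eta y /\ `|y| ^+ 2 < A + e.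
  move=> eta0 e0; apply: contrapT => noy.
  suff /(sup_upper_bound Esup) : E (A + e) by rewrite -/A; lra.
  exists eta => // y Dy; rewrite leNgt; apply/negP => ylt; apply: noy; by exists y.
have /choice [y yD] : forall n : nat, exists y, D n.+1%:R^-1 y /\ `|y| ^+ 2 < A + n.+1%:R^-1.
  by move=> n; apply: A_above; rewrite invr_gt0.
have y_in eta : 0 < eta -> \forall n \near \oo, D eta (y n).
  move=> eta0; near=> n; apply: Dmono (yD n).1.
  by near: n; have := near_infty_natSinv_lt (PosNum eta0); apply: filterS => n /ltW.
exists y => //; apply: (@midpoint_sqr_norm_cvg _ A) => e e0.
have [eta eta0 Aeta] := A_below e e0.
have [N1 _ yN1] := y_in eta eta0; have [N2 _ yN2] := near_infty_natSinv_lt (PosNum e0).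
exists (maxn N1 N2) => a b; rewrite !geq_max => /andP[a1 a2] /andP[b1 b2]; split.
  apply/ltW/(lt_trans (yD a).2); rewrite ltrD2l; exact: yN2.
exact/Aeta/Dmid/yN1/b1/yN1/a1.
Unshelve. all: by end_near.
Qed.

(* Otherwise the convex sets [{M <= min M + eta} /\ {|.|^2 <= |zs|^2 - e}] are all nonempty,
   and a limit of points in them would be a minimizer of norm smaller than [|zs|]. *)
Lemma min_norm_minimizer_near (M : H -> R) (zs : H) :
  convex_fun M -> continuous M -> min_norm_elt [set z | forall y, M z <= M y] zs ->
  forall e, 0 < e -> exists2 eta, 0 < eta &
    forall y, M y <= M zs + eta -> `|zs| ^+ 2 - e <= `|y| ^+ 2.
Proof.
move=> Mconv Mc [zs_min zs_least] e e0; apply: contrapT => no_eta.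
pose D eta := [set y | M y <= M zs + eta /\ `|y| ^+ 2 <= `|zs| ^+ 2 - e].
have Dne eta : 0 < eta -> D eta !=set0.
  move=> eta0; apply: contrapT => noD; apply: no_eta; exists eta => // y Myeta.
  by rewrite leNgt; apply/negP => ylt; apply: noD; exists y; split => //; exact: ltW.
have Dmono eta eta' : eta <= eta' -> D eta `<=` D eta'.
  by move=> le_eta y [My Ny]; split => //; lra.
have Dmid eta a b : D eta a -> D eta b -> D eta (2^-1 *: (a + b)).
  move=> [Ma Na] [Mb Nb]; split; first by have := convex_fun_midpoint a b Mconv; lra.
  by rewrite (sqr_norm_midpoint Hip); have := sqr_ge0 `|a - b|; lra.
have [y ycvg yD] := nested_convex_cvg Dne Dmono Dmid (fun _ _ Dy => Dy.2).
set yl := lim (y @ \oo).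
have Myl : M yl <= M zs.
  apply/ler_addgt0Pr => eta eta0.
  apply: (@closed_cvg _ _ \oo _ (M \o y) [set x | x <= M zs + eta]).
  - exact: closed_le.
  - by apply: filterS (yD eta eta0) => n [].
  - exact: cvg_comp _ _ ycvg (Mc yl).
have Nyl : `|yl| ^+ 2 <= `|zs| ^+ 2 - e.
  have Ny_cvg : `|y n| ^+ 2 @[n --> \oo] --> `|yl| ^+ 2.
    by rewrite expr2; under eq_fun do rewrite expr2; apply: cvgM; exact: cvg_norm.
  apply: (@closed_cvg _ _ \oo _ _ [set x | x <= `|zs| ^+ 2 - e] _ _ _ Ny_cvg).
  - exact: closed_le.
  - by apply: filterS (yD 1 ltr01) => n [].
have := zs_least yl (fun u => le_trans Myl (zs_min u)).
have := normr_ge0 zs; have := normr_ge0 yl; nra.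
Qed.

End NearMinimizers.

Lemma cvg_sqr_norm_gap (R : realType) (V : normedModType R) (T : Type)
    (F : set_system T) {FF : Filter F} (a b : T -> V) (L : V) :
  a @ F --> L ->
  (\forall t \near F, `|a t - b t| ^+ 2 <= 2 * (`|a t| ^+ 2 - `|b t| ^+ 2)) ->
  (forall e, 0 < e -> \forall t \near F, `|L| ^+ 2 - e <= `|b t| ^+ 2) ->
  b @ F --> L.
Proof.
move=> acvg ab_gap b_large; apply/cvgrPdist_lt => eps eps0.
have e0 : 0 < eps ^+ 2 / 16 by rewrite divr_gt0 ?exprn_gt0.
have Na : `|a t| ^+ 2 @[t --> F] --> `|L| ^+ 2.
  by rewrite expr2; under eq_fun do rewrite expr2; apply: cvgM; exact: cvg_norm.
near=> t.
have La : `|L - a t| < eps / 2.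
  by near: t; move: acvg => /cvgrPdist_lt; apply; rewrite divr_gt0.
have a_small : `|a t| ^+ 2 < `|L| ^+ 2 + eps ^+ 2 / 16.
  by near: t; apply: cvgr_lt Na _ _; rewrite ltrDl.
have b_big : `|L| ^+ 2 - eps ^+ 2 / 16 <= `|b t| ^+ 2 by near: t; exact: b_large.
have ab : `|a t - b t| ^+ 2 <= 2 * (`|a t| ^+ 2 - `|b t| ^+ 2) by near: t.
have ab_small : `|a t - b t| < eps / 2 by have := normr_ge0 (a t - b t); nra.
by apply: le_lt_trans (ler_distD (a t) L (b t)) _; lra.
Unshelve. all: by end_near.
Qed.

Lemma tikhonov_coeff_small (R : realType) (beta p a K : R) :
  0 < beta -> 0 < p -> 0 <= a -> 0 < K ->
  \forall t \near +oo, beta / (2 * t `^ p) * a < K.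
Proof.
move=> beta0 p0 a0 K0; pose b := beta * (a + 1) / (2 * K).
have b0 : 0 < b by rewrite /b !(divr_gt0, mulr_gt0) // ltr_wpDl.
pose T := b `^ p^-1; have T0 : 0 <= T by exact: powR_ge0.
have Tp : T `^ p = b by rewrite /T -powRrM mulVf ?gt_eqF // powRr1 // ltW.
near=> t.
have Tt : T < t by near: t; apply: nbhs_pinfty_gt; rewrite num_real.
have tp0 : 0 < t `^ p by apply: powR_gt0; exact: le_lt_trans Tt.
have : b < t `^ p.
  by rewrite -Tp gt0_ltr_powR // ?nnegrE // ltW // (le_lt_trans T0 Tt).
rewrite /b ltr_pdivrMr ?mulr_gt0 // => bt.
by rewrite mulrAC ltr_pdivrMr ?mulr_gt0 //; lra.
Unshelve. all: by end_near.
Qed.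

Theorem mainTheorem5 (R : realType) (H : completeNormedModType R)
  (ip : H -> H -> R) (m : nat) (hm : (0 < m)%N) (f : 'I_m -> H -> R)
  (z0 : 'rV[R]_m -> H)
  (Hip : inner_product ip)
  (Hconv : forall i, convex_fun (f i))
  (HC1 : forall i, C1_fun ip (f i))
  (* (A4) *)
  (HA4ne : forall w, Sset hm f w !=set0)
  (Hz0 : forall w, min_norm_elt (Sset hm f w) (z0 w))
  (HA4cont : continuous z0)
  (beta p t0 : R) (hbeta : 0 < beta) (hp0 : 0 < p) (hp2 : p <= 2) (ht0 : 0 < t0)
  (w : R -> 'rV[R]_m) (wstar : 'rV[R]_m)
  (hwcont : {within `[t0, +oo[, continuous w})
  (hwlim : w t @[t --> +oo] --> wstar)
  (z : R -> H)
  (hz : forall t, t0 <= t -> forall y : H,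
      maxgap hm f (w t) (z t) + beta / (2 * t `^ p) * `|z t| ^+ 2
      <= maxgap hm f (w t) y + beta / (2 * t `^ p) * `|y| ^+ 2) :
  z t @[t --> +oo] --> z0 wstar.
Proof.
have f_cont i : continuous (f i).
  by move=> x; have [g [_ /(_ x)[fdiff _]]] := HC1 i; exact: differentiable_continuous.
have c_pos t : t0 <= t -> 0 < beta / (2 * t `^ p).
  by move=> t0t; rewrite divr_gt0 ?mulr_gt0 ?powR_gt0 // (lt_le_trans ht0 t0t).
have t_large : \forall t \near +oo, t0 <= t by apply: nbhs_pinfty_ge; rewrite num_real.
have x_cvg : z0 (w t) @[t --> +oo] --> z0 wstar := cvg_comp _ _ hwlim (HA4cont wstar).
apply: (cvg_sqr_norm_gap x_cvg).
  near=> t; have t0t : t0 <= t by near: t.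
  exact: (regularized_minimizer_dist Hip (convex_maxgap _ _ Hconv) (hz t t0t) (c_pos t t0t)
    (Hz0 (w t)).1).
move=> e e0; have [eta eta0 near_min] := min_norm_minimizer_near Hip
  (convex_maxgap _ wstar Hconv) (continuous_maxgap f_cont) (Hz0 wstar) e0.
have c_small := tikhonov_coeff_small hbeta hp0 (sqr_ge0 `|z0 wstar|) (divr_gt0 eta0 (ltr0n _ 2)).
near=> t; apply: near_min; have t0t : t0 <= t by near: t.
have w_close : `|wstar - w t| < eta / 4.
  by near: t; move: hwlim => /cvgrPdist_lt; apply; rewrite divr_gt0.
have c_zs : beta / (2 * t `^ p) * `|z0 wstar| ^+ 2 < eta / 2 by near: t.
have := maxgap_regularized_near_min wstar (z0 wstar) (ltW (c_pos t t0t)) (hz t t0t).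
lra.
Unshelve. all: by end_near.
Qed.
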